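(* Let $0<\alpha<1$, $\sigma>0$, $N_1$ a positive integer, $h=\sigma^2\alpha^2$, $T=\sigma\alpha\sqrt{N_1}$, $\kappa=\frac\alpha{1-\alpha}$, and let $n\ge1$ be an integer. For $x\in(0,1]$ and complex $u\notin(-\infty,0]$ let $$f(u,x)=\frac{\sin(\alpha\pi)}{\alpha\pi}\frac{1}{2\sqrt u}\frac{xe^{\sqrt u-T}}{e^{\frac1\alpha(\sqrt u-T)}+x}$$ (principal branch of $\sqrt u$). Let $u^*=\frac{1+(1-2\alpha)\sqrt{4\alpha-4\alpha^2+1}}{2(1-\alpha)^2}$, $\gamma=\alpha\log\!\Big(\frac{\frac1\kappa\sqrt{u^*}+1}{\sqrt{u^*}-1}\Big)+\sqrt{u^*}$, $x^*=e^{\frac1\alpha(\gamma-T)}$, $M_0=2\max\left\{\frac{\sigma^2}{4},1+\mathrm{ceil}\!\left(\frac{9\pi^2}{\sigma^2}\right),2\,\mathrm{ceil}\!\left[\left(1+\sqrt{\pi/\sigma}\right)^4\right]\right\}$, and $\Upsilon=\{x\in[x^*,1]:(T+\alpha\log x)^2-\alpha^2\pi^2>M_0h\}$. For $x\in\Upsilon$ put $a=2\alpha\pi(T+\alpha\log x)$. Then $$\left|\int_0^{2a}\big[f(h+it,x)-f(h-it,x)\big]e^{-\frac{2n\pi}{h}t}\,\mathrm{d}t\right|=\left(\frac{e^h}{h^2}\int_0^1te^{-\frac{2n\pi}{h}t}\,\mathrm{d}t+\frac{e^{\sqrt h}}{\sqrt h}\int_1^{+\infty}\frac{e^{\sqrt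 t}}{\sqrt t}e^{-\frac{2n\pi}{h}t}\,\mathrm{d}t\right)\mathcal{O}(e^{-T})$$ uniformly for $x\in\Upsilon$, with the constant in the $\mathcal{O}$ term independent of $T$, $n$, $x$, $h$, $\alpha$ and $\sigma$.
   Context: $\mathrm{ceil}(y)$ is the least integer $\ge y$. *)

From Stdlib Require Import Reals.
From Coquelicot Require Import Coquelicot.
Open Scope R_scope.

(* ceil y = least integer >= y.  Stdlib's [up r] is the unique integer with
   r < up r <= r + 1, so up r - 1 = floor r and ceil y = - floor (- y). *)
Definition ceilR (y : R) : R := - (IZR (up (- y)) - 1).

Definition Cexp (z : C) : C :=
  (exp (Re z) * cos (Im z), exp (Re z) * sin (Im z)).

(* principal branch of the complex square root (Re >= 0, and Re > 0 off (-oo,0]) *)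
Definition Csqrt (z : C) : C :=
  (sqrt ((Cmod z + Re z) / 2),
   (if Rle_dec 0 (Im z) then 1 else -1) * sqrt ((Cmod z - Re z) / 2)).

Section Params.
Variables (alpha sigma : R) (N1 : nat).

Definition hh : R := sigma ^ 2 * alpha ^ 2.
Definition TT : R := sigma * alpha * sqrt (INR N1).
Definition kappa : R := alpha / (1 - alpha).

Definition fA (u : C) (x : R) : C :=
  RtoC (sin (alpha * PI) / (alpha * PI)) *
  / (RtoC 2 * Csqrt u) *
  (RtoC x * Cexp (Csqrt u - RtoC TT)) /
  (Cexp (RtoC (/ alpha) * (Csqrt u - RtoC TT)) + RtoC x).

Definition ustar : R :=
  (1 + (1 - 2 * alpha) * sqrt (4 * alpha - 4 * alpha ^ 2 + 1)) /
  (2 * (1 - alpha) ^ 2).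

Definition gammaA : R :=
  alpha * ln ((/ kappa * sqrt ustar + 1) / (sqrt ustar - 1)) + sqrt ustar.

Definition xstar : R := exp (/ alpha * (gammaA - TT)).

Definition M0 : R :=
  2 * Rmax (sigma ^ 2 / 4)
           (Rmax (1 + ceilR (9 * PI ^ 2 / sigma ^ 2))
                 (2 * ceilR ((1 + sqrt (PI / sigma)) ^ 4))).

Definition Upsilon (x : R) : Prop :=
  xstar <= x <= 1 /\
  (TT + alpha * ln x) ^ 2 - alpha ^ 2 * PI ^ 2 > M0 * hh.

Definition aA (x : R) : R := 2 * alpha * PI * (TT + alpha * ln x).

End Params.

From Stdlib Require Import Reals Lra Psatz Classical.
From Coquelicot Require Import Coquelicot.
Open Scope R_scope.

(* Write s = sqrt (h + i t) = r + i y.  Since f has real coefficients, f (h - i t) is the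
   conjugate of f (h + i t), so the integrand is 2 i Im f (h + i t) e^(-c t) with
   c = 2 n pi / h.  On Upsilon and for t <= 2 a one has r <= 7 L / 8 with L = T + alpha ln x,
   so the term e^((s - T) / alpha) in the denominator is at most x / 2 and r times it is
   O(alpha x); expanding the imaginary part then gives |Im f| = O(e^(r - T) y (r + 9) / r^2),
   where y = t / (2 r) and sqrt h <= r <= sqrt h + sqrt (t / 2).  The growth e^(sqrt (t/2))
   is absorbed by half of the damping e^(-c t), which leaves an integrand
   O(t e^(-c t / 2)) whose integral is O(1 / c^2); this is compared with the first term
   e^h / h^2 * int_0^1 t e^(-c t) dt of the right-hand side, the second one being
   nonnegative. *)

Lemma Lub_Rbar_full (E : R -> Prop) : (forall x, E x) -> Lub_Rbar E = p_infty.
Proof.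
  intros HE. apply is_lub_Rbar_unique. split.
  - intros x _. exact I.
  - intros [l| |] Hl; simpl; auto.
    + specialize (Hl (l + 1) (HE _)). simpl in Hl. lra.
    + exact (Hl 0 (HE _)).
Qed.

(* [RInt] and [RInt_gen] are limits of filters; for a non-integrable function
   that filter is the full one, whose limit in Coquelicot's construction is
   [real p_infty = 0]. *)
Lemma RInt_C_not_ex (f : R -> C) (a b : R) :
  ~ ex_RInt (V := C_R_CompleteNormedModule) f a b ->
  RInt (V := C_R_CompleteNormedModule) f a b = RtoC 0.
Proof.
  intros Hn. unfold RInt, iota. simpl. unfold lim. simpl.
  unfold C_complete_lim, R_complete_lim.
  rewrite !Lub_Rbar_full; [reflexivity | |];
    intros x y Hy; exfalso; apply Hn; exists y; exact Hy.
Qed.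

Lemma RInt_gen_ge0 (f : R -> R) (a : R) :
  (forall t, a <= t -> 0 <= f t) ->
  0 <= RInt_gen f (at_point a) (Rbar_locally p_infty).
Proof.
  intros Hf.
  destruct (classic (ex_RInt_gen f (at_point a) (Rbar_locally p_infty))) as [He | Hn].
  - assert (Hscal0 : forall u : R, scal 0 u = 0) by exact Rmult_0_l.
    assert (Ha : filter_prod (at_point a) (Rbar_locally p_infty)
                   (fun ab => fst ab = a /\ a < snd ab)).
    { apply (Filter_prod _ _ _ (fun x => x = a) (Rlt a)); [reflexivity | now exists a |].
      intros x y Hx Hy. simpl. auto. }
    assert (Hr := RInt_gen_correct f He).
    assert (Hle : norm (scal 0 (RInt_gen f (at_point a) (Rbar_locally p_infty)))
                  <= RInt_gen f (at_point a) (Rbar_locally p_infty)).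
    { apply (RInt_gen_norm (Fa := at_point a) (Fb := Rbar_locally p_infty)
               (fun y => scal 0 (f y)) f);
        [| | exact (is_RInt_gen_scal f 0 _ Hr) | exact Hr];
        revert Ha; apply filter_imp; intros [x y] [Hx Hy]; simpl in *; subst x.
      - lra.
      - intros z Hz. rewrite Hscal0. change (Rabs 0 <= f z). rewrite Rabs_R0. apply Hf, Hz. }
    rewrite Hscal0 in Hle.
    change (Rabs 0 <= RInt_gen f (at_point a) (Rbar_locally p_infty)) in Hle.
    rewrite Rabs_R0 in Hle. exact Hle.
  - unfold RInt_gen, iota. simpl. unfold lim. simpl. unfold R_complete_lim.
    rewrite Lub_Rbar_full; [simpl; lra |].
    intros x y Hy. exfalso. apply Hn. exists y. exact Hy.
Qed.

Lemma is_RInt_t_exp (k b : R) : 0 < k ->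
  is_RInt (fun t => t * exp (- k * t)) 0 b
    (1 / k ^ 2 - (b / k + 1 / k ^ 2) * exp (- k * b)).
Proof.
  intros Hk.
  set (F := fun t => - (t / k + 1 / k ^ 2) * exp (- k * t)).
  replace (1 / k ^ 2 - (b / k + 1 / k ^ 2) * exp (- k * b)) with (minus (F b) (F 0)).
  - apply (is_RInt_derive F).
    + intros t _. unfold F. auto_derive; [auto | field; lra].
    + intros t _. apply (ex_derive_continuous (fun t => t * exp (- k * t))).
      auto_derive. auto.
  - unfold F, minus, plus, opp. simpl. rewrite Rmult_0_r, exp_0. field. lra.
Qed.

Lemma Cmod_RInt_le_t_exp (F : R -> C) (K k b : R) :
  0 <= K -> 0 < k -> 0 <= b ->
  (forall t, 0 <= t <= b -> Cmod (F t) <= K * (t * exp (- k * t))) ->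
  Cmod (RInt (V := C_R_CompleteNormedModule) F 0 b) <= K / k ^ 2.
Proof.
  intros HK Hk Hb HF.
  assert (Hk2 : 0 < k ^ 2) by (apply pow_lt; lra).
  destruct (classic (ex_RInt (V := C_R_CompleteNormedModule) F 0 b)) as [He | Hn].
  - rewrite Cmod_norm.
    eapply Rle_trans.
    { apply (norm_RInt_le F (fun t => scal K (t * exp (- k * t))) 0 b _ _ Hb).
      - intros t Ht. rewrite <- Cmod_norm. exact (HF t Ht).
      - exact (RInt_correct _ _ _ He).
      - exact (is_RInt_scal _ 0 b K _ (is_RInt_t_exp k b Hk)). }
    change (scal K ?l) with (K * l).
    unfold Rdiv. apply Rmult_le_compat_l; [exact HK |].
    assert (0 <= (b / k + 1 / k ^ 2) * exp (- k * b)).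
    { apply Rmult_le_pos; [| apply Rlt_le, exp_pos].
      assert (0 <= b / k) by (apply Rle_mult_inv_pos; lra).
      assert (0 < 1 / k ^ 2) by (apply Rdiv_lt_0_compat; lra). lra. }
    lra.
  - rewrite (RInt_C_not_ex F 0 b Hn), Cmod_0.
    apply Rle_mult_inv_pos; lra.
Qed.

Lemma Rabs_sin_le (z : R) : Rabs (sin z) <= Rabs z.
Proof.
  assert (Hpos : forall u, 0 < u -> Rabs (sin u) <= u).
  { intros u Hu. assert (Hlt := sin_lt_x u Hu). assert (Hb := SIN_bound u).
    apply Rabs_le. split; [| lra].
    destruct (Rle_lt_dec 1 u); [lra |].
    assert (0 < sin u) by (apply sin_gt_0; [lra | assert (H := PI2_3_2); lra]).
    lra. }
  destruct (Rtotal_order z 0) as [Hz | [-> | Hz]].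
  - rewrite <- (Rabs_Ropp z), <- (Rabs_Ropp (sin z)), <- sin_neg, (Rabs_right (- z)) by lra.
    apply Hpos. lra.
  - rewrite sin_0, Rabs_R0. lra.
  - rewrite (Rabs_right z) by lra. apply Hpos, Hz.
Qed.

Lemma exp_le_compat (a b : R) : a <= b -> exp a <= exp b.
Proof.
  intros Hab. destruct (Rle_lt_or_eq_dec a b Hab) as [Hlt | ->].
  - apply Rlt_le, exp_increasing, Hlt.
  - apply Rle_refl.
Qed.

Lemma sinc_bounds (z : R) : 0 < z < PI -> 0 <= sin z / z <= 1.
Proof.
  intros Hz.
  assert (Hlt := sin_lt_x z (proj1 Hz)).
  assert (Hpos := sin_gt_0 z (proj1 Hz) (proj2 Hz)).
  split.
  - apply Rlt_le, Rdiv_lt_0_compat; lra.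
  - apply Rle_div_l; lra.
Qed.

Lemma ceilR_ge (y : R) : y <= ceilR y.
Proof. unfold ceilR. destruct (archimed (- y)). lra. Qed.

Lemma M0_ge_4 (s : R) : 4 <= M0 s.
Proof.
  unfold M0.
  assert (H1 : 1 <= (1 + sqrt (PI / s)) ^ 4).
  { apply pow_R1_Rle. assert (H := sqrt_pos (PI / s)). lra. }
  assert (Hc := ceilR_ge ((1 + sqrt (PI / s)) ^ 4)).
  assert (Hm1 := Rmax_r (1 + ceilR (9 * PI ^ 2 / s ^ 2)) (2 * ceilR ((1 + sqrt (PI / s)) ^ 4))).
  assert (Hm2 := Rmax_r (s ^ 2 / 4)
                   (Rmax (1 + ceilR (9 * PI ^ 2 / s ^ 2)) (2 * ceilR ((1 + sqrt (PI / s)) ^ 4)))).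
  lra.
Qed.

Lemma M0_mul_sqr_ge (s : R) : 0 < s -> 18 * PI ^ 2 <= M0 s * s ^ 2.
Proof.
  intros Hs. unfold M0.
  assert (Hc := ceilR_ge (9 * PI ^ 2 / s ^ 2)).
  assert (Hm1 := Rmax_l (1 + ceilR (9 * PI ^ 2 / s ^ 2)) (2 * ceilR ((1 + sqrt (PI / s)) ^ 4))).
  assert (Hm2 := Rmax_r (s ^ 2 / 4)
                   (Rmax (1 + ceilR (9 * PI ^ 2 / s ^ 2)) (2 * ceilR ((1 + sqrt (PI / s)) ^ 4)))).
  assert (Hs2 : 0 < s ^ 2) by (apply pow_lt; lra).
  assert (Hdiv : 9 * PI ^ 2 / s ^ 2 * s ^ 2 = 9 * PI ^ 2) by (field; lra).
  set (m := Rmax (s ^ 2 / 4) _) in *.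
  assert (9 * PI ^ 2 / s ^ 2 * s ^ 2 <= m * s ^ 2) by (apply Rmult_le_compat_r; lra).
  assert (0 < PI ^ 2) by (apply pow_lt, PI_RGT_0).
  lra.
Qed.

Lemma ln_ge_1_sub_inv (q : R) : 0 < q -> 1 - / q <= ln q.
Proof.
  intros Hq. assert (H := exp_ineq1_le (- ln q)).
  rewrite exp_Ropp, exp_ln in H by exact Hq. lra.
Qed.

(* When the argument of [ln] is not positive, Stdlib's [ln] returns [0]. *)
Lemma gammaA_ge0 (al : R) : 0 < al < 1 -> 0 <= gammaA al.
Proof.
  intros Hal. unfold gammaA, kappa.
  set (v := sqrt (ustar al)).
  assert (Hv : 0 <= v) by apply sqrt_pos.
  set (k := / (al / (1 - al))).
  assert (Hk : 0 <= k) by (apply Rlt_le, Rinv_0_lt_compat, Rdiv_lt_0_compat; lra).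
  set (Q := (k * v + 1) / (v - 1)).
  destruct (Rle_lt_dec Q 0) as [HQ | HQ].
  { unfold ln. destruct (Rlt_dec 0 Q); [exfalso |]; lra. }
  assert (Hv1 : 1 < v).
  { destruct (Rle_lt_dec v 1) as [Hle | Hlt]; [| exact Hlt].
    exfalso. assert (0 <= k * v) by (apply Rmult_le_pos; lra).
    unfold Q, Rdiv in HQ. destruct (Req_dec v 1) as [Heq | Hne].
    - rewrite Heq, Rminus_diag, Rinv_0, Rmult_0_r in HQ. lra.
    - assert (/ (v - 1) < 0) by (apply Rinv_lt_0_compat; lra). nra. }
  assert (HlnQ : 2 - v <= ln Q).
  { assert (HinvQ : / Q <= v - 1).
    { unfold Q. rewrite Rinv_div. apply Rle_div_l; [nra |].
      assert (0 <= k * v) by (apply Rmult_le_pos; lra). nra. }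
    assert (H := ln_ge_1_sub_inv Q HQ). lra. }
  destruct (Rle_lt_dec 0 (ln Q)); nra.
Qed.

Lemma Upsilon_bounds (al s : R) (N1 : nat) (x : R) :
  0 < al < 1 -> 0 < s -> Upsilon al s N1 x ->
  let L := TT al s N1 + al * ln x in
  0 < x /\ 4 * al * PI < L /\ 4 * hh al s < L ^ 2.
Proof.
  intros Hal Hs [[Hxs _] HM] L.
  assert (Hx : 0 < x) by (assert (0 < xstar al s N1) by apply exp_pos; lra).
  assert (HL0 : 0 <= L).
  { assert (Hln : / al * (gammaA al - TT al s N1) <= ln x).
    { rewrite <- (ln_exp (/ al * (gammaA al - TT al s N1))). apply ln_le, Hxs. apply exp_pos. }
    assert (Hg := gammaA_ge0 al Hal).
    assert (gammaA al - TT al s N1 <= al * ln x).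
    { replace (gammaA al - TT al s N1) with (al * (/ al * (gammaA al - TT al s N1)))
        by (field; lra).
      apply Rmult_le_compat_l; lra. }
    unfold L. lra. }
  assert (HM4 := M0_ge_4 s). assert (HM18 := M0_mul_sqr_ge s Hs).
  assert (Hh : 0 < hh al s) by (unfold hh; apply Rmult_lt_0_compat; apply pow_lt; lra).
  assert (H4h : 4 * hh al s <= M0 s * hh al s) by (apply Rmult_le_compat_r; lra).
  assert (H18 : 18 * PI ^ 2 * al ^ 2 <= M0 s * hh al s).
  { unfold hh. replace (M0 s * (s ^ 2 * al ^ 2)) with (M0 s * s ^ 2 * al ^ 2) by ring.
    apply Rmult_le_compat_r; [apply pow2_ge_0 | exact HM18]. }
  assert (HPI := PI_RGT_0).
  assert (0 < al * PI) by (apply Rmult_lt_0_compat; lra).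
  assert (0 <= al ^ 2 * PI ^ 2) by (apply Rmult_le_pos; apply pow2_ge_0).
  fold L in HM.
  split; [exact Hx | split; [| lra]].
  destruct (Rle_lt_dec L (4 * al * PI)) as [Hle | Hlt]; [exfalso | exact Hlt].
  assert (L ^ 2 <= (4 * al * PI) ^ 2) by (apply pow_incr; lra).
  lra.
Qed.

Lemma Cexp_conj (z : C) : Cexp (Cconj z) = Cconj (Cexp z).
Proof.
  destruct z as [a b]. unfold Cexp, Cconj. simpl. rewrite cos_neg, sin_neg.
  apply injective_projections; simpl; ring.
Qed.

(* Unlike [Cinv_conj], no hypothesis: both sides are [0] at [0]. *)
Lemma Cconj_inv (z : C) : Cconj (/ z) = (/ Cconj z)%C.
Proof.
  destruct z as [a b]. unfold Cconj, Cinv. simpl.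
  replace (- b * (- b * 1)) with (b * (b * 1)) by ring.
  apply injective_projections; simpl; [reflexivity | unfold Rdiv; ring].
Qed.

Lemma Cmod_sub_conj (z : C) : Cmod (z - Cconj z)%C = 2 * Rabs (Im z).
Proof.
  rewrite im_alt', !Cmod_mult, Cmod_Ci, Cmod_R, Cmod_R, Rabs_right by lra. ring.
Qed.

Lemma Csqrt_conj (u : C) : 0 <= Re u -> Csqrt (Cconj u) = Cconj (Csqrt u).
Proof.
  destruct u as [a b]. simpl. intros Ha.
  assert (Hm : Cmod (a, - b) = Cmod (a, b)) by exact (Cmod_conj (a, b)).
  unfold Csqrt, Cconj. simpl. rewrite Hm.
  apply injective_projections; simpl; [reflexivity |].
  destruct (Rle_dec 0 (- b)), (Rle_dec 0 b); try ring; [| exfalso; lra].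
  assert (b = 0) by lra. subst b.
  replace (Cmod (a, 0)) with a.
  - rewrite Rminus_diag. unfold Rdiv. rewrite Rmult_0_l, sqrt_0. ring.
  - change (a = Cmod (RtoC a)). rewrite Cmod_R, Rabs_right; lra.
Qed.

(* f as a function of s = sqrt u: [fA al sigma N1 u x] is convertible to
   [fsq (sin (al * PI) / (al * PI)) x (TT al sigma N1) al (Csqrt u)]. *)
Definition fsq (A x T al : R) (s : C) : C :=
  RtoC A * / (RtoC 2 * s) * (RtoC x * Cexp (s - RtoC T)) /
  (Cexp (RtoC (/ al) * (s - RtoC T)) + RtoC x).

Lemma fsq_conj (A x T al : R) (s : C) :
  fsq A x T al (Cconj s) = Cconj (fsq A x T al s).
Proof.
  assert (Hreal : forall r : R, Cconj (RtoC r) = RtoC r).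
  { intros r. unfold Cconj, RtoC. simpl. now rewrite Ropp_0. }
  unfold fsq, Cdiv.
  rewrite !Cmult_conj, !Cconj_inv, !Cplus_conj, <- !Cexp_conj, !Cmult_conj, !Cminus_conj, !Hreal.
  reflexivity.
Qed.

Lemma Im_fsq (A x T al r y : R) : 0 < r -> 0 < al ->
  let E := exp ((r - T) / al) in
  let Q1 := E * cos (y / al) + x in
  let Q2 := E * sin (y / al) in
  Q1 ^ 2 + Q2 ^ 2 <> 0 ->
  Im (fsq A x T al (r, y)) =
    A * x * exp (r - T) * (r * (sin y * Q1 - cos y * Q2) - y * (cos y * Q1 + sin y * Q2))
    / (2 * (r ^ 2 + y ^ 2) * (Q1 ^ 2 + Q2 ^ 2)).
Proof.
  intros Hr Hal E Q1 Q2 HQ.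
  unfold fsq, Cexp, Cdiv, Cminus, Cmult, Cinv, Cplus, Copp, RtoC, Re, Im; simpl.
  replace (/ al * (r + - T) - 0 * (y + - 0)) with ((r - T) / al) by (field; lra).
  replace (/ al * (y + - 0) + 0 * (r + - T)) with (y / al) by (field; lra).
  replace (r + - T) with (r - T) by ring.
  replace (y + - 0) with y by ring.
  fold E. unfold Q1, Q2 in *.
  assert (r ^ 2 + y ^ 2 <> 0) by nra.
  set (P := exp (r - T)). clearbody P E.
  field. split; nra.
Qed.

Lemma sqr_add_polar_ge (E x th : R) : 0 <= E -> 2 * E <= x ->
  x ^ 2 / 4 <= (E * cos th + x) ^ 2 + (E * sin th) ^ 2.
Proof.
  intros HE HEx.
  replace ((E * cos th + x) ^ 2 + (E * sin th) ^ 2)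
    with (E ^ 2 * (sin th ^ 2 + cos th ^ 2) + 2 * E * x * cos th + x ^ 2) by ring.
  rewrite <- !Rsqr_pow2, sin2_cos2, !Rsqr_pow2.
  assert (Hc := COS_bound th).
  assert (0 <= E * x * (cos th + 1)) by (apply Rmult_le_pos; nra).
  nra.
Qed.

Lemma Im_fsq_numer_le (x al r y E : R) :
  0 < x -> 0 < al <= 1 -> 0 < r -> 0 <= y -> 0 <= E -> 2 * E <= x ->
  r * E <= 7 * al * x ->
  let Q1 := E * cos (y / al) + x in
  let Q2 := E * sin (y / al) in
  Rabs (r * (sin y * Q1 - cos y * Q2) - y * (cos y * Q1 + sin y * Q2)) <= x * y * (r + 9).
Proof.
  intros Hx Hal Hr Hy HE HEx HrE Q1 Q2.
  replace (r * (sin y * Q1 - cos y * Q2) - y * (cos y * Q1 + sin y * Q2))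
    with (r * E * sin (y - y / al) + r * x * sin y - y * E * cos (y - y / al) - y * x * cos y)
    by (unfold Q1, Q2; rewrite sin_minus, cos_minus; ring).
  assert (Hyal : y <= y / al) by (apply Rle_div_r; nra).
  assert (H1 : Rabs (r * E * sin (y - y / al)) <= 7 * x * y).
  { rewrite Rabs_mult, (Rabs_right (r * E)) by nra.
    apply Rle_trans with (r * E * (y / al)).
    - apply Rmult_le_compat_l; [nra |].
      eapply Rle_trans; [apply Rabs_sin_le |]. rewrite Rabs_left1; lra.
    - replace (r * E * (y / al)) with (r * E * y / al) by (field; lra).
      apply Rle_div_l; nra. }
  assert (H2 : Rabs (r * x * sin y) <= r * x * y).
  { rewrite Rabs_mult, (Rabs_right (r * x)) by nra.
    apply Rmult_le_compat_l; [nra |].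
    eapply Rle_trans; [apply Rabs_sin_le | rewrite Rabs_right; lra]. }
  assert (H3 : Rabs (y * E * cos (y - y / al)) <= x * y / 2).
  { rewrite Rabs_mult, (Rabs_right (y * E)) by nra.
    assert (Rabs (cos (y - y / al)) <= 1) by (apply Rabs_le, COS_bound).
    assert (y * E * Rabs (cos (y - y / al)) <= y * E * 1) by (apply Rmult_le_compat_l; nra).
    assert (y * (2 * E) <= y * x) by (apply Rmult_le_compat_l; lra).
    lra. }
  assert (H4 : Rabs (y * x * cos y) <= x * y).
  { rewrite Rabs_mult, (Rabs_right (y * x)) by nra.
    assert (Rabs (cos y) <= 1) by (apply Rabs_le, COS_bound).
    assert (0 <= y * x) by nra.
    assert (y * x * Rabs (cos y) <= y * x * 1) by (apply Rmult_le_compat_l; lra).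
    lra. }
  apply Rabs_le_between in H1, H2, H3, H4.
  apply Rabs_le. split; nra.
Qed.

Lemma Im_fsq_bound (A x T al r y : R) :
  0 <= A <= 1 -> 0 < x -> 0 < al <= 1 -> 0 < r -> 0 <= y ->
  let E := exp ((r - T) / al) in
  2 * E <= x -> r * E <= 7 * al * x ->
  2 * Rabs (Im (fsq A x T al (r, y))) <= 4 * exp (r - T) * y * (r + 9) / r ^ 2.
Proof.
  intros HA Hx Hal Hr Hy E HEx HrE.
  assert (HE : 0 <= E) by apply Rlt_le, exp_pos.
  assert (HQ := sqr_add_polar_ge E x (y / al) HE HEx).
  assert (HN := Im_fsq_numer_le x al r y E Hx Hal Hr Hy HE HEx HrE). cbv zeta in HN.
  assert (Hx2 : 0 < x ^ 2) by (apply pow_lt; lra).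
  rewrite (Im_fsq A x T al r y Hr (proj1 Hal)) by (fold E; lra). fold E.
  set (N := r * _ - y * _) in *.
  set (Q := (E * cos (y / al) + x) ^ 2 + (E * sin (y / al)) ^ 2) in *.
  set (P := exp (r - T)).
  assert (HP : 0 < P) by apply exp_pos.
  assert (HD : 2 * r ^ 2 * (x ^ 2 / 4) <= 2 * (r ^ 2 + y ^ 2) * Q).
  { apply Rmult_le_compat; nra. }
  assert (HD0 : 0 < 2 * r ^ 2 * (x ^ 2 / 4)) by (assert (0 < r ^ 2) by nra; nra).
  assert (HAxP : 0 <= A * x * P) by (apply Rmult_le_pos; [apply Rmult_le_pos |]; lra).
  assert (HDen : 0 < 2 * (r ^ 2 + y ^ 2) * Q) by lra.
  rewrite Rabs_div, Rabs_mult, (Rabs_right (A * x * P)), (Rabs_right (2 * _ * Q)) by lra.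
  replace (4 * P * y * (r + 9) / r ^ 2)
    with (2 * (x * P * (x * y * (r + 9)) / (2 * r ^ 2 * (x ^ 2 / 4)))) by (field; lra).
  apply Rmult_le_compat_l; [lra |]. unfold Rdiv.
  apply Rmult_le_compat.
  - apply Rmult_le_pos; [nra | apply Rabs_pos].
  - apply Rlt_le, Rinv_0_lt_compat. nra.
  - assert (0 <= Rabs N) by apply Rabs_pos.
    assert (HxP : 0 <= x * P) by nra.
    apply Rmult_le_compat; try lra.
    rewrite Rmult_assoc. rewrite <- (Rmult_1_l (x * P)) at 2.
    apply Rmult_le_compat_r; lra.
  - apply Rinv_le_contravar; lra.
Qed.

Lemma Csqrt_re_im_bounds (h t : R) : 0 < h -> 0 <= t ->
  let r := Re (Csqrt (h, t)) in
  let y := Im (Csqrt (h, t)) in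
  sqrt h <= r /\ 0 <= y /\ r * y = t / 2 /\ r ^ 2 <= h + t / 2.
Proof.
  intros Hh Ht r y.
  assert (Hm : Cmod (h, t) = sqrt (h ^ 2 + t ^ 2)) by (unfold Cmod; simpl; f_equal; ring).
  unfold r, y, Csqrt. cbn [Re Im fst snd]. rewrite Hm.
  destruct (Rle_dec 0 t) as [_ | Hnt]; [| lra]. rewrite Rmult_1_l.
  set (m := sqrt (h ^ 2 + t ^ 2)).
  assert (Hm2 : m ^ 2 = h ^ 2 + t ^ 2) by (apply pow2_sqrt; nra).
  assert (Hhm : h <= m).
  { rewrite <- (sqrt_pow2 h) by lra. apply sqrt_le_1_alt. nra. }
  assert (Hmt : m <= h + t).
  { rewrite <- (sqrt_pow2 (h + t)) by lra. apply sqrt_le_1_alt. nra. }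
  repeat split.
  - apply sqrt_le_1_alt. lra.
  - apply sqrt_pos.
  - rewrite <- sqrt_mult by lra.
    replace ((m + h) / 2 * ((m - h) / 2)) with ((t / 2) ^ 2) by nra.
    apply sqrt_pow2. lra.
  - rewrite pow2_sqrt; lra.
Qed.

Lemma exp_div_bounds (al x T r : R) : 0 < al -> 0 < x -> 0 <= r ->
  let L := T + al * ln x in
  8 * al <= L -> 8 * r <= 7 * L ->
  let E := exp ((r - T) / al) in
  2 * E <= x /\ r * E <= 7 * al * x.
Proof.
  intros Hal Hx Hr L HaL HrL E.
  set (z := (L - r) / al).
  assert (Hz1 : 1 <= z) by (apply Rle_div_r; lra).
  assert (Hrz : r <= 7 * al * z).
  { unfold z. replace (7 * al * ((L - r) / al)) with (7 * (L - r)) by (field; lra). lra. }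
  assert (HE : E * exp z = x).
  { unfold E. rewrite <- exp_plus, <- (exp_ln x) by exact Hx. f_equal. unfold z, L. field. lra. }
  assert (Hez := exp_ineq1_le z).
  assert (HE0 : 0 < E) by apply exp_pos.
  split.
  - assert (E * 2 <= E * exp z) by (apply Rmult_le_compat_l; lra). lra.
  - assert (r * E <= 7 * al * z * E) by (apply Rmult_le_compat_r; lra).
    assert (z * E <= exp z * E) by (apply Rmult_le_compat_r; lra).
    assert (0 < al) by lra. nra.
Qed.

Lemma shifted_inv_cube_decr (s r : R) : 0 < s -> s <= r ->
  (r + 9) / r ^ 3 <= (s + 9) / s ^ 3.
Proof.
  intros Hs Hsr.
  replace ((r + 9) / r ^ 3) with (/ r ^ 2 + 9 * / r ^ 3) by (field; lra).
  replace ((s + 9) / s ^ 3) with (/ s ^ 2 + 9 * / s ^ 3) by (field; lra).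
  apply Rplus_le_compat; [| apply Rmult_le_compat_l; [lra |]].
  - apply Rinv_le_contravar; [apply pow_lt; lra | apply pow_incr; lra].
  - apply Rinv_le_contravar; [apply pow_lt; lra | apply pow_incr; lra].
Qed.

Lemma sqrt_half_le (t c : R) : 0 <= t -> 0 < c -> sqrt (t / 2) <= / (4 * c) + c * t / 2.
Proof.
  intros Ht Hc. set (w := sqrt (t / 2)).
  assert (Hw2 : w ^ 2 = t / 2) by (apply pow2_sqrt; lra).
  assert (Hsq : 0 <= c * (w - / (2 * c)) ^ 2) by (apply Rmult_le_pos; [lra | apply pow2_ge_0]).
  replace (c * (w - / (2 * c)) ^ 2) with (c * w ^ 2 - w + / (4 * c)) in Hsq by (field; lra).
  rewrite Hw2 in Hsq. lra.
Qed.

Lemma exp_sqrt_absorb (h t c r T : R) : 0 < h -> 0 <= t -> 6 / h <= c ->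
  r ^ 2 <= h + t / 2 ->
  exp (r - T) * exp (- c * t) <= exp (sqrt h + h / 24 - T) * exp (- (c / 2) * t).
Proof.
  intros Hh Ht Hc Hr2.
  assert (Hc0 : 0 < c) by (assert (0 < 6 / h) by (apply Rdiv_lt_0_compat; lra); lra).
  assert (Hrs : r <= sqrt h + sqrt (t / 2)).
  { assert (Hs := sqrt_pos h). assert (Hst := sqrt_pos (t / 2)).
    assert (r ^ 2 <= (sqrt h + sqrt (t / 2)) ^ 2).
    { replace ((sqrt h + sqrt (t / 2)) ^ 2)
        with (sqrt h ^ 2 + sqrt (t / 2) ^ 2 + 2 * sqrt h * sqrt (t / 2)) by ring.
      rewrite !pow2_sqrt by lra. nra. }
    destruct (Rle_lt_dec r (sqrt h + sqrt (t / 2))); nra. }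
  assert (Hc4 : / (4 * c) <= h / 24).
  { replace (h / 24) with (/ (4 * (6 / h))) by (field; lra).
    apply Rinv_le_contravar; [apply Rmult_lt_0_compat; [lra | apply Rdiv_lt_0_compat; lra] | lra]. }
  assert (Hw := sqrt_half_le t c Ht Hc0).
  rewrite <- !exp_plus. apply exp_le_compat. lra.
Qed.

Lemma integrand_bound (A x T al h t c : R) :
  0 <= A <= 1 -> 0 < al < 1 -> 0 < x -> 0 < h ->
  let L := T + al * ln x in
  4 * al * PI < L -> 4 * h < L ^ 2 -> 0 <= t <= 4 * al * PI * L -> 6 / h <= c ->
  Cmod ((fsq A x T al (Csqrt (h, t)) - fsq A x T al (Csqrt (h, - t))) * RtoC (exp (- c * t)))
  <= 2 * ((sqrt h + 9) / sqrt h ^ 3) * exp (sqrt h + h / 24 - T) * (t * exp (- (c / 2) * t)).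
Proof.
  intros HA Hal Hx Hh L HaL HhL Ht Hc.
  change (h, - t) with (Cconj (h, t)).
  rewrite Csqrt_conj by (simpl; lra).
  rewrite fsq_conj, Cmod_mult, Cmod_sub_conj, Cmod_R, (Rabs_right (exp _))
    by apply Rle_ge, Rlt_le, exp_pos.
  destruct (Csqrt_re_im_bounds h t Hh (proj1 Ht)) as (Hhr & Hy & Hry & Hr2).
  destruct (Csqrt (h, t)) as [r y]. cbn [Re Im fst snd] in *.
  assert (HPI := PI2_3_2).
  assert (Hsh : 0 < sqrt h) by (apply sqrt_lt_R0, Hh).
  assert (Hr : 0 < r) by lra.
  assert (HrL : 8 * r <= 7 * L).
  { assert (Hap : 0 < al * PI) by (apply Rmult_lt_0_compat; lra).
    assert (Hal_L : al * PI * L < L ^ 2 / 4).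
    { assert (0 < (L - 4 * al * PI) * L) by (apply Rmult_lt_0_compat; lra). nra. }
    assert (r ^ 2 < (7 * L / 8) ^ 2) by nra.
    destruct (Rle_lt_dec (8 * r) (7 * L)); [assumption | nra]. }
  destruct (exp_div_bounds al x T r (proj1 Hal) Hx (Rlt_le _ _ Hr)) as [HEx HrE];
    [fold L; nra | exact HrL |].
  assert (Him := Im_fsq_bound A x T al r y HA Hx (conj (proj1 Hal) (Rlt_le _ _ (proj2 Hal)))
                   Hr Hy HEx HrE).
  assert (Hyt : y = t / (2 * r)) by (apply (Rmult_eq_reg_l r); [rewrite Hry; field |]; lra).
  assert (Hdecr := shifted_inv_cube_decr (sqrt h) r Hsh Hhr).
  assert (Habs := exp_sqrt_absorb h t c r T Hh (proj1 Ht) Hc Hr2).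
  apply Rle_trans with (4 * exp (r - T) * y * (r + 9) / r ^ 2 * exp (- c * t)).
  { apply Rmult_le_compat_r; [apply Rlt_le, exp_pos | exact Him]. }
  replace (4 * exp (r - T) * y * (r + 9) / r ^ 2 * exp (- c * t))
    with (2 * t * ((r + 9) / r ^ 3) * (exp (r - T) * exp (- c * t)))
    by (rewrite Hyt; field; lra).
  replace (2 * ((sqrt h + 9) / sqrt h ^ 3) * exp (sqrt h + h / 24 - T) * (t * exp (- (c / 2) * t)))
    with (2 * t * ((sqrt h + 9) / sqrt h ^ 3) * (exp (sqrt h + h / 24 - T) * exp (- (c / 2) * t)))
    by ring.
  apply Rmult_le_compat; try lra.
  - apply Rmult_le_pos; [lra | apply Rle_mult_inv_pos; [lra | apply pow_lt, Hr]].
  - apply Rmult_le_pos; apply Rlt_le, exp_pos.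
  - apply Rmult_le_compat_l; lra.
Qed.

Lemma exp_1_ge : 9 / 4 <= exp 1.
Proof.
  replace 1 with (1 / 2 + 1 / 2) by field. rewrite exp_plus.
  assert (H := exp_ineq1_le (1 / 2)). nra.
Qed.

Lemma one_sub_exp_lb (h c : R) : 0 < h -> 6 / h <= c ->
  3 / (30 + h ^ 2) <= 1 - (1 + c) * exp (- c).
Proof.
  intros Hh Hc.
  assert (Hc0 : 0 < c) by (assert (0 < 6 / h) by (apply Rdiv_lt_0_compat; lra); lra).
  rewrite exp_Ropp. set (E := exp c).
  assert (HE : 0 < E) by apply exp_pos.
  assert (H30 : 0 < 30 + h ^ 2) by nra.
  destruct (Rle_lt_dec 1 c) as [H1 | H1].
  - assert (HEc : 9 / 4 * c <= E).
    { unfold E. replace c with (1 + (c - 1)) by ring. rewrite exp_plus.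
      assert (H := exp_ineq1_le (c - 1)). assert (H' := exp_1_ge).
      assert (0 < exp (c - 1)) by apply exp_pos. nra. }
    assert (Hq : (1 + c) * / E <= 8 / 9).
    { apply Rmult_le_reg_r with E; [lra |]. rewrite Rmult_assoc, Rinv_l by lra. nra. }
    assert (3 / (30 + h ^ 2) <= 1 / 10).
    { apply Rmult_le_reg_r with (30 + h ^ 2); [lra |].
      unfold Rdiv. rewrite Rmult_assoc, Rinv_l by lra. nra. }
    lra.
  - assert (HEc : 1 + c + c ^ 2 / 4 <= E).
    { unfold E.
      replace (exp c) with (exp (c / 2) * exp (c / 2)) by (rewrite <- exp_plus; f_equal; field).
      assert (H := exp_ineq1_le (c / 2)). nra. }
    assert (Hcc : 36 / h ^ 2 <= c ^ 2).
    { replace (36 / h ^ 2) with ((6 / h) ^ 2) by (field; lra).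
      apply pow_incr. split; [apply Rlt_le, Rdiv_lt_0_compat |]; lra. }
    assert (Hq : c ^ 2 / 12 <= 1 - (1 + c) * / E).
    { replace (1 - (1 + c) * / E) with ((E - 1 - c) / E) by (field; lra).
      apply (Rle_div_r (c ^ 2 / 12) (E - 1 - c) E); [lra |].
      assert (HE3 : E <= 3)
        by (apply Rle_trans with (exp 1); [apply exp_le_compat; lra | apply exp_le_3]).
      assert (c ^ 2 * E <= c ^ 2 * 3) by (apply Rmult_le_compat_l; [apply pow2_ge_0 | lra]).
      lra. }
    assert (3 / (30 + h ^ 2) <= 3 / h ^ 2).
    { apply Rmult_le_compat_l; [lra |]. apply Rinv_le_contravar; [apply pow_lt |]; lra. }
    assert (3 / h ^ 2 = 36 / h ^ 2 / 12) by (field; lra).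
    lra.
Qed.

Lemma poly_le_pow4 (w : R) : 0 <= w ->
  8 * (w ^ 2 + 9 * w) * (30 + w ^ 4) <= 100000 * (1 + w ^ 2 / 8) ^ 4.
Proof.
  intros Hw.
  assert (H1 := pow2_ge_0 (w - 1)).
  assert (0 <= w ^ 2 * (w - 1) ^ 2) by (apply Rmult_le_pos; [apply pow2_ge_0 | auto]).
  assert (0 <= w ^ 4 * (w - 1) ^ 2) by (apply Rmult_le_pos; [apply pow_le | ]; auto).
  assert (0 <= w ^ 3) by (apply pow_le; auto). assert (0 <= w ^ 5) by (apply pow_le; auto).
  assert (0 <= w ^ 6) by (apply pow_le; auto). assert (0 <= w ^ 8) by (apply pow_le; auto).
  assert (0 <= w ^ 4) by (apply pow_le; auto).
  nra.
Qed.

Lemma poly_exp_le (w : R) : 0 <= w ->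
  8 * (w ^ 2 + 9 * w) * (30 + w ^ 4) * exp (w + w ^ 2 / 24) <= 300000 * exp (w ^ 2).
Proof.
  intros Hw.
  replace (exp (w ^ 2)) with (exp (w + w ^ 2 / 24) * exp (23 * w ^ 2 / 24 - w))
    by (rewrite <- exp_plus; f_equal; field).
  assert (H1 : exp (w ^ 2 / 2 - 1) <= exp (23 * w ^ 2 / 24 - w)).
  { apply exp_le_compat. assert (0 <= (w - 12 / 11) ^ 2) by apply pow2_ge_0. nra. }
  (* e^(w^2/2) = (e^(w^2/8))^4 >= (1 + w^2/8)^4, and e <= 3 *)
  assert (H2 : (1 + w ^ 2 / 8) ^ 4 / 3 <= exp (w ^ 2 / 2 - 1)).
  { replace (w ^ 2 / 2 - 1) with (w ^ 2 / 8 + w ^ 2 / 8 + w ^ 2 / 8 + w ^ 2 / 8 + - (1))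
      by field.
    rewrite !exp_plus, exp_Ropp.
    assert (Hq := exp_ineq1_le (w ^ 2 / 8)).
    assert (0 <= w ^ 2 / 8) by (assert (0 <= w ^ 2) by apply pow2_ge_0; lra).
    assert (He := exp_le_3). assert (0 < exp 1) by apply exp_pos.
    set (q := exp (w ^ 2 / 8)) in *.
    assert (Hp : (1 + w ^ 2 / 8) ^ 4 <= q ^ 4) by (apply pow_incr; lra).
    replace (q * q * q * q) with (q ^ 4) by ring.
    unfold Rdiv. apply Rmult_le_compat.
    - apply pow_le. lra.
    - apply Rlt_le, Rinv_0_lt_compat. lra.
    - exact Hp.
    - apply Rinv_le_contravar; lra. }
  assert (H3 := poly_le_pow4 w Hw).
  assert (H4 : 0 < exp (w + w ^ 2 / 24)) by apply exp_pos.
  assert (H5 : 8 * (w ^ 2 + 9 * w) * (30 + w ^ 4) <= 300000 * exp (23 * w ^ 2 / 24 - w)) by lra.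
  assert (H6 := Rmult_le_compat_r _ _ _ (Rlt_le _ _ H4) H5).
  lra.
Qed.

Lemma bound_le_first_term (h c T : R) : 0 < h -> 6 / h <= c ->
  2 * ((sqrt h + 9) / sqrt h ^ 3) * exp (sqrt h + h / 24 - T) / (c / 2) ^ 2 <=
  exp h / h ^ 2 * (1 / c ^ 2 - (1 / c + 1 / c ^ 2) * exp (- c * 1)) * (300000 * exp (- T)).
Proof.
  intros Hh Hc.
  assert (Hc0 : 0 < c) by (assert (0 < 6 / h) by (apply Rdiv_lt_0_compat; lra); lra).
  assert (HJ := one_sub_exp_lb h c Hh Hc).
  set (w := sqrt h) in *.
  assert (Hw : 0 < w) by (apply sqrt_lt_R0, Hh).
  assert (Hhw : h = w ^ 2) by (unfold w; rewrite pow2_sqrt; lra).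
  assert (HF := poly_exp_le w (Rlt_le _ _ Hw)).
  clearbody w. subst h.
  rewrite Rmult_1_r.
  replace (1 / c ^ 2 - (1 / c + 1 / c ^ 2) * exp (- c))
    with ((1 - (1 + c) * exp (- c)) / c ^ 2) by (field; lra).
  replace (exp (w + w ^ 2 / 24 - T)) with (exp (w + w ^ 2 / 24) * exp (- T))
    by (rewrite <- exp_plus; f_equal; ring).
  set (J := 1 - (1 + c) * exp (- c)) in *.
  set (X := exp (w + w ^ 2 / 24)) in *. set (Y := exp (w ^ 2)) in *.
  set (Z := exp (- T)).
  assert (HX : 0 < X) by apply exp_pos. assert (HZ : 0 < Z) by apply exp_pos.
  clearbody J X Y Z.
  assert (H30 : 0 < 30 + (w ^ 2) ^ 2) by nra.
  assert (HJ' : 3 <= J * (30 + (w ^ 2) ^ 2)).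
  { apply Rle_div_l in HJ; lra. }
  replace (2 * ((w + 9) / w ^ 3) * (X * Z) / (c / 2) ^ 2)
    with (8 * (w ^ 2 + 9 * w) * X * (Z / ((w ^ 2) ^ 2 * c ^ 2))) by (field; lra).
  replace (Y / (w ^ 2) ^ 2 * (J / c ^ 2) * (300000 * Z))
    with (300000 * Y * J * (Z / ((w ^ 2) ^ 2 * c ^ 2))) by (field; lra).
  apply Rmult_le_compat_r.
  { apply Rle_mult_inv_pos; [lra |]. apply Rmult_lt_0_compat; apply pow_lt; nra. }
  replace ((w ^ 2) ^ 2) with (w ^ 4) in * by ring.
  assert (HJ0 : 0 < J) by nra.
  assert (Hpos : 0 <= 8 * (w ^ 2 + 9 * w) * X) by (apply Rmult_le_pos; nra).
  assert (8 * (w ^ 2 + 9 * w) * X * 3 <= 8 * (w ^ 2 + 9 * w) * X * (J * (30 + w ^ 4)))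
    by (apply Rmult_le_compat_l; lra).
  assert (8 * (w ^ 2 + 9 * w) * (30 + w ^ 4) * X * J <= 300000 * Y * J)
    by (apply Rmult_le_compat_r; lra).
  nra.
Qed.

Theorem lemmaA1 :
  exists C0 : R, 0 < C0 /\
  forall (alpha sigma : R) (N1 n : nat) (x : R),
    0 < alpha < 1 -> 0 < sigma -> (1 <= N1)%nat -> (1 <= n)%nat ->
    Upsilon alpha sigma N1 x ->
    let h := hh alpha sigma in
    let T := TT alpha sigma N1 in
    let a := aA alpha sigma N1 x in
    Cmod (@RInt C_R_CompleteNormedModule (fun t : R =>
                  ((fA alpha sigma N1 (h, t) x - fA alpha sigma N1 (h, (- t)%R) x)
                   * RtoC (exp (- (2 * INR n * PI / h) * t)))%C) 0 (2 * a))
    <= ( exp h / h ^ 2 *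
           RInt (fun t => t * exp (- (2 * INR n * PI / h) * t)) 0 1
       + exp (sqrt h) / sqrt h *
           RInt_gen (fun t => exp (sqrt t) / sqrt t * exp (- (2 * INR n * PI / h) * t))
                    (at_point 1) (Rbar_locally p_infty) )
       * (C0 * exp (- T)).
Proof.
  exists 300000. split; [lra |].
  intros al s N1 n x Hal Hs _ Hn HU h T a.
  destruct (Upsilon_bounds al s N1 x Hal Hs HU) as (Hx & HaL & HhL).
  fold T h in HaL, HhL.
  assert (Hh : 0 < h) by (apply Rmult_lt_0_compat; apply pow_lt; lra).
  assert (HPI := PI2_3_2).
  assert (Hap : 0 < al * PI) by (apply Rmult_lt_0_compat; lra).
  assert (Hn1 : 1 <= INR n) by exact (le_INR 1 n Hn).
  set (c := 2 * INR n * PI / h).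
  assert (Hc : 6 / h <= c).
  { assert (PI <= INR n * PI) by (rewrite <- (Rmult_1_l PI) at 1; apply Rmult_le_compat_r; lra).
    apply Rmult_le_compat_r; [apply Rlt_le, Rinv_0_lt_compat |]; lra. }
  assert (Hc0 : 0 < c) by (assert (0 < 6 / h) by (apply Rdiv_lt_0_compat; lra); lra).
  assert (Ha : 2 * a = 4 * al * PI * (T + al * ln x)) by (unfold a, aA, T; ring).
  assert (HA : 0 <= sin (al * PI) / (al * PI) <= 1) by (apply sinc_bounds; nra).
  rewrite (is_RInt_unique _ _ _ _ (is_RInt_t_exp c 1 Hc0)).
  set (K := 2 * ((sqrt h + 9) / sqrt h ^ 3) * exp (sqrt h + h / 24 - T)).
  apply Rle_trans with (K / (c / 2) ^ 2).
  - apply Cmod_RInt_le_t_exp; [| lra | rewrite Ha; apply Rmult_le_pos; lra |].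
    + apply Rmult_le_pos; [| apply Rlt_le, exp_pos].
      assert (0 < sqrt h) by (apply sqrt_lt_R0, Hh).
      apply Rmult_le_pos; [lra | apply Rle_mult_inv_pos; [lra | apply pow_lt; lra]].
    + intros t Ht. rewrite Ha in Ht.
      exact (integrand_bound _ x T al h t c HA Hal Hx Hh HaL HhL Ht Hc).
  - eapply Rle_trans; [exact (bound_le_first_term h c T Hh Hc) |].
    apply Rmult_le_compat_r; [apply Rmult_le_pos; [lra | apply Rlt_le, exp_pos] |].
    assert (Hsec : 0 <= exp (sqrt h) / sqrt h *
                        RInt_gen (fun t => exp (sqrt t) / sqrt t * exp (- c * t))
                                 (at_point 1) (Rbar_locally p_infty)).
    { apply Rmult_le_pos.
      - apply Rle_mult_inv_pos; [apply Rlt_le, exp_pos | apply sqrt_lt_R0, Hh].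
      - apply RInt_gen_ge0. intros t Ht.
        apply Rmult_le_pos; [| apply Rlt_le, exp_pos].
        apply Rle_mult_inv_pos; [apply Rlt_le, exp_pos | apply sqrt_lt_R0; lra]. }
    lra.
Qed.
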